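(* In the curved-exam game described in the context: (1) In any pure Nash equilibrium $x^*$, if $x_i^*=0$ then $x_j^*=0$ for every student $j$ with $\alpha_j<\alpha_i$; and if $x_i^*>0$ then $x_j^*>0$ for every student $j$ with $\alpha_j>\alpha_i$. (2) Let $0\le k\le n$ and let $x^{*(k)}$ be a $k$-don't care equilibrium. Then for each of the top $n-k$ students $i$, $$x_i^{*(k)}=\frac{(n-1)\alpha_i-n(1-\alpha_i)\big(m-\bar x^{*(k)}\big)}{n-\alpha_i},\qquad\text{where}\qquad \bar x^{*(k)}=\frac{(n-1)(m+1)S_2-(n-k)(m+1-1/n)}{(n-1)(S_2-1)+k},\quad S_2:=\sum_{i=k+1}^n\frac1{n-\alpha_{(i)}}.$$
   Context: The curved-exam game: fix $n\ge2$, abilities $\alpha_1,\dots,\alpha_n\in(0,1)$, target mean $m\in(0,1)$. Student $i$ chooses $x_i\in[0,1]$; $\bar x=\frac1n\sum_j x_j$, $\bar x_{-i}=\frac1{n-1}\sum_{j\ne i}x_j$. Grade $G_i(x)=x_i+\max(m-\bar x,0)$ (not truncated at 1); payoff $U_i(x)=G_i(x)^{\alpha_i}(1-x_i)^{1-\alpha_i}$. Let $\alpha_{(1)}\le\alpha_{(2)}\le\dots\le\alpha_{(n)}$ be the order statistics of the abilities (students relabelled accordingly). A $k$-don't care equilibrium $x^{*(k)}$ is a pure Nash equilibrium with an exam curve ($\bar x<m$) in which the $k$ students with the lowest abilities $\alpha_{(1)},\dots,\alpha_{(k)}$ exert zero effort and the top $n-k$ students (abilities $\alpha_{(k+1)},\dots,\alpha_{(n)}$)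 exert positive effort; $\bar x^{*(k)}$ denotes its mean effort. For $k=0$ this is a curved equilibrium with all efforts positive. *)

From HB Require Import structures.
From mathcomp Require Import all_boot all_order all_algebra all_fingroup.
From mathcomp Require Import all_classical all_reals all_analysis.
Set Implicit Arguments. Unset Strict Implicit. Unset Printing Implicit Defensive.
Import Order.TTheory GRing.Theory Num.Theory.
Local Open Scope ring_scope.

Section CurvedExam.
Variables (R : realType) (n : nat).

Definition xbar (x : 'I_n -> R) : R := (\sum_(j < n) x j) / n%:R.

(* grade G_i(x) = x_i + max(m - x̄, 0)  (not truncated at 1) *)
Definition grade (m : R) (x : 'I_n -> R) (i : 'I_n) : R :=
  x i + Num.max (m - xbar x) 0.

Definition payoff (alpha : 'I_n -> R) (m : R) (x : 'I_n -> R) (i : 'I_n) : R :=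
  (grade m x i) `^ (alpha i) * (1 - x i) `^ (1 - alpha i).

Definition upd (x : 'I_n -> R) (i : 'I_n) (y : R) : 'I_n -> R :=
  fun j => if j == i then y else x j.

Definition feasible (x : 'I_n -> R) : Prop := forall i, 0 <= x i <= 1.

Definition is_NE (alpha : 'I_n -> R) (m : R) (x : 'I_n -> R) : Prop :=
  feasible x /\
  forall (i : 'I_n) (y : R), 0 <= y <= 1 ->
    payoff alpha m (upd x i y) i <= payoff alpha m x i.

(* sigma lists the students in nondecreasing order of ability:
   student sigma i has ability alpha_(i+1) (order statistic, 0-based i) *)
Definition sorts_abilities (alpha : 'I_n -> R) (sigma : {perm 'I_n}) : Prop :=
  forall i j : 'I_n, (i <= j)%N -> alpha (sigma i) <= alpha (sigma j).

Definition k_dont_care (alpha : 'I_n -> R) (m : R) (sigma : {perm 'I_n})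
    (k : nat) (x : 'I_n -> R) : Prop :=
  [/\ is_NE alpha m x, xbar x < m,
      (forall i : 'I_n, (i < k)%N -> x (sigma i) = 0) &
      (forall i : 'I_n, (k <= i)%N -> 0 < x (sigma i))].

(* S_2 = Σ_{i=k+1}^{n} 1/(n - α_(i))  (1-based), i.e. 0-based indices k..n-1 *)
Definition S2 (alpha : 'I_n -> R) (sigma : {perm 'I_n}) (k : nat) : R :=
  \sum_(i < n | (k <= i)%N) (n%:R - alpha (sigma i))^-1.

End CurvedExam.

From HB Require Import structures.
From mathcomp Require Import all_boot all_order all_algebra all_fingroup.
From mathcomp Require Import all_classical all_reals all_analysis.
From mathcomp Require Import ring lra.
Set Implicit Arguments. Unset Strict Implicit. Unset Printing Implicit Defensive.
Import Order.TTheory GRing.Theory Num.Theory.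
Local Open Scope ring_scope.

(* While the exam stays curved, a deviation of student i to
   effort y gives the grade c_i + (1 - 1/n) y, and never less otherwise, so
   the payoff is bounded below by the Cobb-Douglas function
   (c_i + (1 - 1/n) y)^a (1 - y)^(1-a).  By weighted AM-GM this function
   strictly increases towards its stationary point, so in a curved equilibrium
   every effort is the positive part of the stationary effort
   ((n-1) a_i - n (1 - a_i) g) / (n - a_i), g = m - xbar, which is increasing
   in a_i.  A zero effort forces the exam to be curved (otherwise the shirker
   earns nothing), whence (1); summing the positive efforts of a k-don't care
   equilibrium gives a linear equation for xbar, whence (2). *)

Section CobbDouglas.
Variable R : realType.

Lemma powR_AMGM (u v a : R) : 0 <= u -> 0 <= v -> 0 < a < 1 ->
  u `^ a * v `^ (1 - a) <= a * u + (1 - a) * v.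
Proof.
move=> u0 v0 /andP[a0 a1].
have a'0 : 0 < 1 - a by rewrite subr_gt0.
have := @conjugate_powR R (u `^ a) (v `^ (1 - a)) a^-1 (1 - a)^-1
  (powR_ge0 _ _) (powR_ge0 _ _) ltac:(by rewrite invr_gt0) ltac:(by rewrite invr_gt0).
rewrite !invrK addrC subrK => /(_ erefl).
rewrite -!powRrM !mulfV ?gt_eqF // !powRr1 //.
by rewrite (mulrC u) (mulrC v).
Qed.

Definition cobb_douglas (a b c y : R) : R := (c + b * y) `^ a * (1 - y) `^ (1 - a).

Definition cobb_douglas_argmax (a b c : R) : R := a - (1 - a) * c / b.

(* Dividing by the value at [y], weighted AM-GM bounds the ratio by the
   tangent-line value [1 - b (y - x) (argmax - y) / ((c + b y) (1 - y))]. *)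
Lemma cobb_douglas_lt (a b c x y : R) : 0 < a < 1 -> 0 < b -> 0 < c ->
  0 <= x <= 1 -> 0 <= y < 1 -> 0 < (y - x) * (cobb_douglas_argmax a b c - y) ->
  cobb_douglas a b c x < cobb_douglas a b c y.
Proof.
move=> a01 b0 c0 /andP[x0 x1] /andP[y0 y1] ascent.
have C0 : 0 < c + b * y by rewrite ltr_wpDr // mulr_ge0 // ltW.
have A0 : 0 < c + b * x by rewrite ltr_wpDr // mulr_ge0 // ltW.
have D0 : 0 < 1 - y by rewrite subr_gt0.
have B0 : 0 <= 1 - x by rewrite subr_ge0.
rewrite /cobb_douglas.
set C := c + b * y; set D := 1 - y; set A := c + b * x; set B := 1 - x.
have -> : A = C * (A / C) by rewrite mulrC divfK // gt_eqF.
have -> : B = D * (B / D) by rewrite mulrC divfK // gt_eqF.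
have AC : 0 <= A / C by rewrite divr_ge0 // ltW.
have BD : 0 <= B / D by rewrite divr_ge0 // ltW.
rewrite (powRM _ (ltW C0) AC) (powRM _ (ltW D0) BD) mulrACA.
have P : 0 < C `^ a * D `^ (1 - a) by rewrite mulr_gt0 // powR_gt0.
rewrite -[X in _ < X]mulr1 ltr_pM2l //.
apply: le_lt_trans; first exact: powR_AMGM.
have -> : a * (A / C) + (1 - a) * (B / D) =
    1 - b * ((y - x) * (cobb_douglas_argmax a b c - y)) / (C * D).
  by rewrite /A /B /C /D /cobb_douglas_argmax; field; rewrite !gt_eqF.
by rewrite ltrBlDr ltrDl divr_gt0 // mulr_gt0.
Qed.

Lemma eq_max0_of_no_ascent (x s : R) : 0 <= x <= 1 -> s < 1 ->
  (forall y, 0 <= y < 1 -> (y - x) * (s - y) <= 0) -> x = Num.max s 0.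
Proof.
move=> /andP[x0 x1] s1 no_ascent.
set t := Num.max s 0.
have t1 : t < 1 by rewrite gt_max s1 ltr01.
apply/eqP; apply/negPn/negP => xt.
have y01 : 0 <= (x + t) / 2 < 1.
  rewrite divr_ge0 ?addr_ge0 ?le_max ?lexx ?orbT //=.
  by rewrite ltr_pdivrMr ?ltr0n // mul1r (_ : (2 : R) = 1 + 1) ?ler_ltD.
have := no_ascent _ y01; apply/negP; rewrite -ltNge /t.
case: (leP 0 s) => s0.
  have : 0 < (s - x) ^+ 2.
    by rewrite exprn_even_gt0 //= subr_eq0 eq_sym; move: xt; rewrite /t max_l.
  nra.
have {}x0 : 0 < x by rewrite lt_neqAle x0 andbT eq_sym; move: xt; rewrite /t max_r ?ltW.
nra.
Qed.

End CobbDouglas.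

Lemma sumr_const_ord_geq (V : nmodType) (n k : nat) (c : V) :
  \sum_(i < n | (k <= i)%N) c = c *+ (n - k).
Proof.
transitivity (\sum_(i < n | xpredT i && (k <= i)%N) c); first exact: eq_bigl.
by rewrite -(big_geq_mkord k n xpredT (fun _ => c)) sumr_const_nat.
Qed.

Section CurvedExam.
Variables (R : realType) (n : nat) (alpha : 'I_n -> R) (m : R).
Hypothesis n_ge2 : (2 <= n)%N.
Hypothesis alpha01 : forall i, 0 < alpha i < 1.
Local Notation N := (n%:R : R).
Local Notation b := (1 - N^-1).

Lemma N_gt1 : 1 < N. Proof. by rewrite ltr1n. Qed.

Lemma N_neq0 : N != 0. Proof. by rewrite gt_eqF // (lt_trans ltr01 N_gt1). Qed.

Lemma b_gt0 : 0 < b.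
Proof. by rewrite subr_gt0 invf_lt1 ?N_gt1 // (lt_trans ltr01 N_gt1). Qed.

Lemma xbar_upd (x : 'I_n -> R) i y : xbar (upd x i y) = xbar x + (y - x i) / N.
Proof.
rewrite /xbar -mulrDl; congr (_ / _).
rewrite (bigD1 i) //= [in RHS](bigD1 i) //= /upd eqxx.
rewrite (eq_bigr x); last by move=> j /negbTE ->.
ring.
Qed.

(* While the exam stays curved, the grade of student [i] is affine in the
   own effort [y], with slope [1 - 1/n] and this intercept. *)
Definition grade_intercept (x : 'I_n -> R) (i : 'I_n) : R := m - xbar x + x i / N.

Lemma grade_upd_ge (x : 'I_n -> R) i y :
  grade_intercept x i + b * y <= grade m (upd x i y) i.
Proof.
rewrite /grade xbar_upd /upd eqxx.
have -> : grade_intercept x i + b * y = y + (m - (xbar x + (y - x i) / N)).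
  by rewrite /grade_intercept; field; exact: N_neq0.
by rewrite lerD2l le_max lexx.
Qed.

Lemma curved_grade (x : 'I_n -> R) i : xbar x < m ->
  grade m x i = grade_intercept x i + b * x i.
Proof.
move=> curved; rewrite /grade max_l; last by rewrite subr_ge0 ltW.
by rewrite /grade_intercept; field; exact: N_neq0.
Qed.

Lemma payoff_upd_ge (x : 'I_n -> R) i y : 0 <= grade_intercept x i -> 0 <= y ->
  cobb_douglas (alpha i) b (grade_intercept x i) y <= payoff alpha m (upd x i y) i.
Proof.
move=> c0 y0; have /andP[a0 _] := alpha01 i.
have ge0 : 0 <= grade_intercept x i + b * y by rewrite addr_ge0 // mulr_ge0 // ltW // b_gt0.
rewrite /cobb_douglas /payoff {2}/upd eqxx.
apply: ler_wpM2r; first exact: powR_ge0.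
apply: ge0_ler_powR; rewrite ?nnegrE ?(ltW a0) ?grade_upd_ge //.
exact: le_trans (grade_upd_ge _ _ _).
Qed.

Lemma curved_payoff (x : 'I_n -> R) i : xbar x < m ->
  payoff alpha m x i = cobb_douglas (alpha i) b (grade_intercept x i) (x i).
Proof. by move=> curved; rewrite /payoff curved_grade. Qed.

Lemma NE_zero_curved (x : 'I_n -> R) i : is_NE alpha m x -> x i = 0 -> xbar x < m.
Proof.
move=> [_ best] xi0; rewrite ltNge; apply/negP => flat.
have /andP[a0 _] := alpha01 i.
have half01 : 0 <= (2^-1 : R) <= 1.
  by rewrite invr_ge0 ler0n /= invf_le1 ?ler1n ?ltr0n.
have := best i _ half01; apply/negP; rewrite -ltNge.
have -> : payoff alpha m x i = 0.
  by rewrite /payoff /grade xi0 add0r max_r ?subr_le0 // powR0 ?mul0r ?gt_eqF.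
rewrite /payoff /grade /upd eqxx mulr_gt0 // powR_gt0 //.
  by rewrite ltr_wpDr ?le_max ?lexx ?orbT // invr_gt0 ltr0n.
by rewrite subr_gt0 invf_lt1 ?ltr1n ?ltr0n.
Qed.

Lemma curved_NE_no_ascent (x : 'I_n -> R) i y : is_NE alpha m x -> xbar x < m ->
  0 <= y < 1 ->
  (y - x i) * (cobb_douglas_argmax (alpha i) b (grade_intercept x i) - y) <= 0.
Proof.
move=> [feasible best] curved /andP[y0 y1].
have /andP[xi0 _] := feasible i.
have c0 : 0 < grade_intercept x i.
  by rewrite /grade_intercept ltr_wpDr ?subr_gt0 // divr_ge0 ?ler0n.
rewrite leNgt; apply/negP => ascent.
have := cobb_douglas_lt (alpha01 i) b_gt0 c0 (feasible i) _ ascent.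
rewrite y0 y1 -curved_payoff // => /(_ isT) /lt_le_trans /(_ (payoff_upd_ge (ltW c0) y0)).
by rewrite ltNge best ?y0 ?ltW.
Qed.

(* The stationary effort of a student of ability [a] facing the curve
   [g = m - xbar]. *)
Definition interior_effort (a g : R) : R := ((N - 1) * a - N * (1 - a) * g) / (N - a).

Lemma alpha_ltN i : alpha i < N.
Proof. by have /andP[_ a1] := alpha01 i; rewrite (lt_trans a1 N_gt1). Qed.

Lemma N_sub_alpha_gt0 i : 0 < N - alpha i.
Proof. by rewrite subr_gt0 alpha_ltN. Qed.

Lemma interior_effortE (a g : R) : a != N ->
  interior_effort a g = N * (N - 1) * (1 + g) / (N - a) - (N - 1 + N * g).
Proof. by move=> aN; rewrite /interior_effort; field; rewrite subr_eq0 eq_sym. Qed.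

Lemma interior_effort_lt (a a' g : R) : 0 <= g -> a < a' -> a' < N ->
  interior_effort a g < interior_effort a' g.
Proof.
move=> g0 aa' a'N; have aN := lt_trans aa' a'N.
rewrite !interior_effortE ?lt_eqF // ltrD2r ltr_pM2l; last first.
  by rewrite !mulr_gt0 ?subr_gt0 ?N_gt1 ?(lt_trans ltr01 N_gt1) ?ltr_wpDr.
by rewrite ltf_pV2 ?posrE ?subr_gt0 // ltrD2l ltrN2.
Qed.

Lemma curved_NE_effort (x : 'I_n -> R) i : is_NE alpha m x -> xbar x < m ->
  x i = Num.max (interior_effort (alpha i) (m - xbar x)) 0.
Proof.
move=> NE curved; have [feasible _] := NE.
have /andP[xi0 _] := feasible i; have /andP[_ a1] := alpha01 i.
have c0 : 0 < grade_intercept x i.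
  by rewrite /grade_intercept ltr_wpDr ?subr_gt0 // divr_ge0 ?ler0n.
set s := cobb_douglas_argmax (alpha i) b (grade_intercept x i).
have s_lt_a : s < alpha i.
  by rewrite ltrBlDr ltrDl divr_gt0 ?b_gt0 // mulr_gt0 // subr_gt0.
have := eq_max0_of_no_ascent (feasible i) (lt_trans s_lt_a a1)
  (fun y => curved_NE_no_ascent i NE curved).
set phi := interior_effort _ _.
(* [s] and [phi] lie on the same side of [x i]. *)
have scale : s - x i = (N - alpha i) / (N * b) * (phi - x i).
  rewrite /s /phi /cobb_douglas_argmax /interior_effort /grade_intercept.
  by field; rewrite N_neq0 !gt_eqF ?N_sub_alpha_gt0 // subr_gt0 N_gt1.
have k0 : 0 < (N - alpha i) / (N * b).
  by rewrite divr_gt0 ?N_sub_alpha_gt0 ?mulr_gt0 ?b_gt0 ?(lt_trans ltr01 N_gt1).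
case: (leP 0 s) => s0 xe.
  move: scale; rewrite xe subrr => /esym/eqP.
  by rewrite mulf_eq0 gt_eqF //= subr_eq0 => /eqP ->; rewrite max_l.
move: scale; rewrite xe !subr0 => scale.
by rewrite max_r // ltW // -(pmulr_rlt0 _ k0) -scale.
Qed.

Lemma NE_zero_effort (x : 'I_n -> R) i j : is_NE alpha m x ->
  x i = 0 -> alpha j < alpha i -> x j = 0.
Proof.
move=> NE xi0 aji; have curved := NE_zero_curved NE xi0.
have := curved_NE_effort i NE curved; rewrite xi0 => /esym/max_idPr phi_i_le0.
rewrite (curved_NE_effort j NE curved) max_r // ltW // (lt_le_trans _ phi_i_le0) //.
have /andP[_ ai1] := alpha01 i.
by rewrite interior_effort_lt ?subr_ge0 ?ltW // (lt_trans ai1 N_gt1).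
Qed.

Lemma NE_pos_effort (x : 'I_n -> R) i j : is_NE alpha m x ->
  0 < x i -> alpha i < alpha j -> 0 < x j.
Proof.
move=> NE xi_gt0 aij; have /andP[xj0 _] := NE.1 j.
rewrite lt_neqAle xj0 andbT eq_sym; apply/eqP => xj_eq0.
by move: xi_gt0; rewrite (NE_zero_effort NE xj_eq0 aij) ltxx.
Qed.

Lemma S2_denominator_gt0 (sigma : {perm 'I_n}) k : (k <= n)%N ->
  0 < (N - 1) * (S2 alpha sigma k - 1) + k%:R.
Proof.
move=> kn.
have -> : (N - 1) * (S2 alpha sigma k - 1) + k%:R =
    (N - 1) * \sum_(i < n | (k <= i)%N) ((N - alpha (sigma i))^-1 - N^-1) + k%:R / N.
  rewrite sumrB sumr_const_ord_geq -[N^-1 *+ _]mulr_natr natrB // /S2.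
  by field; exact: N_neq0.
have term_gt0 i : 0 < (N - alpha (sigma i))^-1 - N^-1.
  have /andP[a0 _] := alpha01 (sigma i).
  rewrite subr_gt0 ltf_pV2 ?posrE ?N_sub_alpha_gt0 ?(lt_trans ltr01 N_gt1) //.
  by rewrite ltrBlDr ltrDl.
have sum_ge0 : 0 <= \sum_(i < n | (k <= i)%N) ((N - alpha (sigma i))^-1 - N^-1).
  by apply: sumr_ge0 => i _; exact: ltW.
have N1_gt0 : 0 < N - 1 by rewrite subr_gt0 N_gt1.
case: (ltnP k n) => [kn' | nk].
  rewrite ltr_wpDr ?divr_ge0 ?ler0n // mulr_gt0 //.
  rewrite (bigD1 (Ordinal kn')) //= ltr_wpDr // sumr_ge0 // => i _.
  exact: ltW.
have -> : k%:R / N = 1.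
  by rewrite (_ : k = n) ?divff ?N_neq0 //; apply/eqP; rewrite eqn_leq kn.
by rewrite ltr_wpDl ?ltr01 // mulr_ge0 // ltW.
Qed.

Section DontCare.
Variables (sigma : {perm 'I_n}) (k : nat) (x : 'I_n -> R).
Hypothesis dont_care : k_dont_care alpha m sigma k x.

Lemma dont_care_effort (i : 'I_n) : (k <= i)%N ->
  x (sigma i) = interior_effort (alpha (sigma i)) (m - xbar x).
Proof.
have [NE curved _ top] := dont_care.
move=> ki; have := top i ki; rewrite (curved_NE_effort _ NE curved).
by rewrite lt_max ltxx orbF => /ltW /max_idPl.
Qed.

Lemma dont_care_sum : \sum_(j < n) x j =
  \sum_(i < n | (k <= i)%N) interior_effort (alpha (sigma i)) (m - xbar x).
Proof.
have [_ _ bottom _] := dont_care.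
rewrite (reindex_inj (@perm_inj _ sigma)) /= (bigID (fun i : 'I_n => (k <= i)%N)) /=.
rewrite [X in _ + X]big1 ?addr0; last by move=> i; rewrite -ltnNge => /bottom.
by apply: eq_bigr => i; exact: dont_care_effort.
Qed.

Lemma dont_care_mean : (k <= n)%N ->
  xbar x = ((N - 1) * (m + 1) * S2 alpha sigma k - (n - k)%:R * (m + 1 - N^-1))
           / ((N - 1) * (S2 alpha sigma k - 1) + k%:R).
Proof.
move=> kn; set X := xbar x; set S := S2 alpha sigma k.
have balance : X * N = N * (N - 1) * (1 + (m - X)) * S - (N - k%:R) * (N - 1 + N * (m - X)).
  have sumE : \sum_(j < n) x j = X * N by rewrite /X /xbar divfK ?N_neq0.
  rewrite -sumE dont_care_sum -/X.
  under eq_bigr => i _ do rewrite interior_effortE ?lt_eqF ?alpha_ltN //.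
  by rewrite sumrB -mulr_sumr sumr_const_ord_geq -[_ *+ (n - k)]mulr_natl natrB.
have := S2_denominator_gt0 sigma kn; rewrite -/S => D_gt0.
apply: (canRL (mulfK (lt0r_neq0 D_gt0))).
apply: (mulIf N_neq0); apply/eqP; rewrite -subr_eq0; apply/eqP.
transitivity (X * N - (N * (N - 1) * (1 + (m - X)) * S - (N - k%:R) * (N - 1 + N * (m - X)))).
  by rewrite natrB //; field; exact: N_neq0.
by rewrite balance subrr.
Qed.

End DontCare.

End CurvedExam.

Theorem mainTheorem13 (R : realType) (n : nat) (hn : (2 <= n)%N)
    (alpha : 'I_n -> R) (halpha : forall i, 0 < alpha i < 1)
    (m : R) (hm : 0 < m < 1) :
  (* (1) monotonicity of participation in any pure Nash equilibrium *)
  (forall x : 'I_n -> R, is_NE alpha m x ->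
     (forall i j : 'I_n, x i = 0 -> alpha j < alpha i -> x j = 0) /\
     (forall i j : 'I_n, 0 < x i -> alpha i < alpha j -> 0 < x j)) /\
  (* (2) closed form of a k-don't care equilibrium *)
  (forall (sigma : {perm 'I_n}) (k : nat) (x : 'I_n -> R),
     sorts_abilities alpha sigma -> (k <= n)%N ->
     k_dont_care alpha m sigma k x ->
     (forall i : 'I_n, (k <= i)%N ->
        x (sigma i) =
          ((n%:R - 1) * alpha (sigma i)
           - n%:R * (1 - alpha (sigma i)) * (m - xbar x))
          / (n%:R - alpha (sigma i))) /\
     xbar x =
       ((n%:R - 1) * (m + 1) * S2 alpha sigma k
        - (n - k)%:R * (m + 1 - n%:R^-1))
       / ((n%:R - 1) * (S2 alpha sigma k - 1) + k%:R)).
Proof.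
split=> [x NE | sigma k x _ kn dont_care].
  split=> i j.
    exact: (NE_zero_effort hn halpha NE).
  exact: (NE_pos_effort hn halpha NE).
split; first exact: (dont_care_effort hn halpha dont_care).
exact: (dont_care_mean hn halpha dont_care kn).
Qed.
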